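(* Let $G$ be a matrix with entries from a field $\mathbb{F}$, with row index set $S$ and column index set $T$. Suppose $S=S_1\cup\cdots\cup S_m$ and $T=T_1\cup\cdots\cup T_n$ are partitions into pairwise disjoint sets. Let $s_1,\dots,s_m,t_1,\dots,t_n$ be non-negative integers with $t_j\le |T_j|$ for all $j$. Then there exist subsets $\mathbf{s}_i\subseteq S_i$ with $|\mathbf{s}_i|=s_i$ ($1\le i\le m$) and $\mathbf{t}_j\subseteq T_j$ with $|\mathbf{t}_j|=t_j$ ($1\le j\le n$) such that \[ \operatorname{rank}\Big(G\big(\textstyle\bigcup_{i=1}^m\mathbf{s}_i,\bigcup_{j=1}^n\mathbf{t}_j\big)\Big)=\sum_{i=1}^m s_i, \] if and only if for every $I\subseteq\{1,\dots,m\}$ and every $K\subseteq\{1,\dots,n\}$, \[ \operatorname{rank}\Big(G\big(\textstyle\bigcup_{i\in I}S_i,\bigcup_{k\in K}T_k\big)\Big)\ \ge\ \sum_{i\in I}s_i+\sum_{k\in K}t_k-\sum_{j=1}^n t_j . \]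
   Context: For $\mathbf{s}\subseteq S$ and $\mathbf{t}\subseteq T$, $G(\mathbf{s},\mathbf{t})$ denotes the submatrix of $G$ formed by the rows with indices in $\mathbf{s}$ and the columns with indices in $\mathbf{t}$ (the rank of a submatrix with no rows or no columns is $0$). *)

From HB Require Import structures.
From mathcomp Require Import all_boot all_order all_algebra.
Set Implicit Arguments. Unset Strict Implicit. Unset Printing Implicit Defensive.
Import Order.TTheory GRing.Theory Num.Theory.

Definition submatrix (F : fieldType) (p q : nat) (G : 'M[F]_(p, q))
  (s : {set 'I_p}) (t : {set 'I_q}) : 'M[F]_(#|s|, #|t|) :=
  mxsub (fun i : 'I_#|s| => enum_val i) (fun j : 'I_#|t| => enum_val j) G.

(* Consider the linear matroid on the disjoint union of the row
   and column indices of G: a row index carries its row of G, a column index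
   its unit row vector, and the rank rk of a set is the dimension of its
   span.  This rank is monotone, submodular and bounded by cardinality, and
   for the rows R together with the columns D it equals
   #|D| + rank G(R, ~: D)  (rk_rows_cols).  Hence a choice of s i rows in
   each S i and t j columns in each T j with rank G(s, t) = sum s is the same
   as an independent choice of s i rows in each S i and #|T j| - t j columns
   (those left out) in each T j.

   Sufficiency of the
   rank condition is rado_multi applied to the blocks above, whose Rado
   condition is exactly the rank condition (rado_condition_blocks);
   necessity follows because subsets of independent sets are independent. *)

From HB Require Import structures.
From mathcomp Require Import all_boot all_order all_algebra.
From mathcomp Require Import zify.
Set Implicit Arguments. Unset Strict Implicit. Unset Printing Implicit Defensive.
Import GRing.Theory.

Lemma card_tag_in (K : finType) (d : K -> nat) (L : {set K}) :
  #|[set x : {k : K & 'I_(d k)} | tag x \in L]| = \sum_(k in L) d k.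
Proof.
rewrite -sum1_card (eq_bigr (fun k => \sum_(j : 'I_(d k)) 1)); last first.
  by move=> k _; rewrite sum1_card card_ord.
rewrite (sig_big_dep (fun k => k \in L) (fun _ _ => true) (fun _ _ => 1)) /=.
by apply: eq_bigl => x; rewrite inE andbT.
Qed.

Lemma card_bigcup_le (I U : finType) (P : pred I) (A : I -> {set U}) :
  #|\bigcup_(i | P i) A i| <= \sum_(i | P i) #|A i|.
Proof.
elim/big_rec2: _ => [|i a B _ IH]; first by rewrite cards0.
by apply: leq_trans (leq_card_setU _ _) _; rewrite leq_add2l.
Qed.

Lemma card_bigcup_disjoint (I U : finType) (A : I -> {set U}) (L : {set I}) :
  (forall i j, i != j -> [disjoint A i & A j]) ->
  #|\bigcup_(i in L) A i| = \sum_(i in L) #|A i|.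
Proof.
move=> A_disj; move: {2}#|L| (leqnn #|L|) => N; elim: N L => [|N IH] L size_L.
  by move: size_L; rewrite leqn0 cards_eq0 => /eqP ->; rewrite !big_set0 cards0.
have [->|[i0 Li0]] := set_0Vmem L; first by rewrite !big_set0 cards0.
rewrite (big_setD1 i0 Li0) (big_setD1 i0 Li0) /= cardsU IH; last first.
  by move: size_L; rewrite (cardsD1 i0 L) Li0.
suff -> : A i0 :&: \bigcup_(i in L :\ i0) A i = set0 by rewrite cards0 subn0.
apply/disjoint_setI0/bigcup_disjoint => i; rewrite !inE => /andP [neq_i _].
by apply: A_disj; rewrite eq_sym.
Qed.

Lemma sum_setC (I : finType) (f : I -> nat) (K : {set I}) :
  \sum_i f i = \sum_(i in K) f i + \sum_(i in ~: K) f i.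
Proof.
rewrite (bigID (mem K)) /=; congr (_ + _).
by apply: eq_bigl => i; rewrite inE.
Qed.

Section SubmodularRank.
Variables (E : finType) (r : {set E} -> nat).
Hypothesis r_mono : forall A B : {set E}, A \subset B -> r A <= r B.
Hypothesis r_submod :
  forall A B : {set E}, r (A :|: B) + r (A :&: B) <= r A + r B.
Hypothesis r_card : forall A : {set E}, r A <= #|A|.

(* A set X is independent when #|X| <= r X (hence r X = #|X|); subsets of
   independent sets are independent. *)
Lemma indep_subset (X Y : {set E}) : Y \subset X -> #|X| <= r X -> #|Y| <= r Y.
Proof.
move=> sYX indX.
have := r_submod (X :&: Y) (X :\: Y); rewrite setID (setIidPr sYX).
have := r_card (X :\: Y); rewrite cardsDS // => r_diff.
have := subset_leq_card sYX; lia.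
Qed.

Definition hall (I : finType) (A : I -> {set E}) : Prop :=
  forall J : {set I}, #|J| <= r (\bigcup_(j in J) A j).

Definition indep_transversal (I : finType) (A : I -> {set E}) : Prop :=
  exists f : I -> E, (forall i, f i \in A i) /\ #|I| <= r (f @: [set: I]).

Section Transversal.
Variable I : finType.

(* Base case of Rado's theorem: every set of the family has at most one
   element, so Hall's condition forces them to be singletons. *)
Lemma rado_singletons (A : I -> {set E}) :
  (forall i, #|A i| <= 1) -> hall A -> indep_transversal A.
Proof.
move=> small hallA.
have /fin_all_exists [f fA] : forall i, exists x, x \in A i.
  move=> i; have := hallA [set i]; rewrite cards1 big_set1 => rank_i.
  have /card_gt0P [x Ax] : 0 < #|A i| by apply: leq_trans rank_i (r_card _).
  by exists x.
exists f; split => //.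
have := hallA [set: I]; rewrite cardsT => /leq_trans; apply; apply: r_mono.
apply/bigcupsP => i _; apply/subsetP => x Ax.
have [->|neq_x] := eqVneq x (f i); first by rewrite imset_f ?inE.
have : 1 < #|A i| by apply/card_gt1P; exists x, (f i).
by rewrite ltnNge small.
Qed.

Definition shrink (A : I -> {set E}) (i0 : I) (z : E) (i : I) : {set E} :=
  if i == i0 then A i0 :\ z else A i.

Lemma shrink_sub A i0 z i : shrink A i0 z i \subset A i.
Proof. by rewrite /shrink; case: eqP => [->|_]; rewrite ?subsetDl. Qed.

Lemma shrink_neq A i0 z i : i != i0 -> shrink A i0 z i = A i.
Proof. by rewrite /shrink => /negbTE ->. Qed.

Lemma shrink_violator A i0 z (J : {set I}) :
  hall A -> r (\bigcup_(j in J) shrink A i0 z j) < #|J| -> i0 \in J.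
Proof.
move=> hallA; apply: contraTT => i0J; rewrite -leqNgt.
rewrite (eq_bigr A) ?hallA // => j jJ; apply: shrink_neq.
by apply: contraNneq i0J => <-.
Qed.

Lemma shrink_cup A i0 x y (J1 J2 : {set I}) :
  x != y -> i0 \in J1 -> i0 \in J2 ->
  \bigcup_(j in J1 :|: J2) A j \subset
    (\bigcup_(j in J1) shrink A i0 x j) :|: (\bigcup_(j in J2) shrink A i0 y j).
Proof.
move=> neq_xy i0J1 i0J2; apply/bigcupsP => j; rewrite inE => j12.
apply/subsetP => z Az; rewrite inE.
have [eq_j|neq_j] := eqVneq j i0.
  subst j; have [eq_z|neq_z] := eqVneq z x.
    apply/orP; right; apply/bigcupP; exists i0 => //.
    by rewrite /shrink eqxx !inE Az eq_z neq_xy.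
  apply/orP; left; apply/bigcupP; exists i0 => //.
  by rewrite /shrink eqxx !inE neq_z.
by case/orP: j12 => jJ; apply/orP; [left|right]; apply/bigcupP;
  exists j => //; rewrite shrink_neq.
Qed.

Lemma shrink_cap A i0 x y (J1 J2 : {set I}) :
  \bigcup_(j in (J1 :&: J2) :\ i0) A j \subset
    (\bigcup_(j in J1) shrink A i0 x j) :&: (\bigcup_(j in J2) shrink A i0 y j).
Proof.
apply/bigcupsP => j; rewrite !inE => /and3P [neq_j j1 j2]; rewrite subsetI.
by rewrite -{1}(shrink_neq A x neq_j) -(shrink_neq A y neq_j) !bigcup_sup.
Qed.

(* Otherwise
   there are violating subfamilies J1 (removing x) and J2 (removing y), and
   submodularity applied to their spans contradicts Hall's condition for
   J1 :|: J2 and (J1 :&: J2) :\ i0. *)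
Lemma rado_shrink A i0 x y : hall A -> x != y ->
  hall (shrink A i0 x) \/ hall (shrink A i0 y).
Proof.
move=> hallA neq_xy.
case: (boolP [forall J : {set I}, #|J| <= r (\bigcup_(j in J) shrink A i0 x j)]).
  by move/forallP; left.
case: (boolP [forall J : {set I}, #|J| <= r (\bigcup_(j in J) shrink A i0 y j)]).
  by move/forallP; right.
rewrite !negb_forall => /existsP [J2]; rewrite -ltnNge => viol2.
move=> /existsP [J1]; rewrite -ltnNge => viol1; exfalso.
have i0J1 := shrink_violator hallA viol1.
have i0J2 := shrink_violator hallA viol2.
have := leq_trans (hallA _) (r_mono (shrink_cup A neq_xy i0J1 i0J2)).
have := leq_trans (hallA _) (r_mono (shrink_cap A i0 x y J1 J2)).
have := r_submod (\bigcup_(j in J1) shrink A i0 x j) (\bigcup_(j in J2) shrink A i0 y j).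
have := cardsUI J1 J2; have := cardsD1 i0 (J1 :&: J2); rewrite inE i0J1 i0J2 /=.
lia.
Qed.

(* Rado's theorem for submodular rank functions: Hall's condition is
   sufficient for an independent transversal.  Induction on the total
   size of the family, shrinking a set with two elements. *)
Theorem rado (A : I -> {set E}) : hall A -> indep_transversal A.
Proof.
move: {2}(\sum_i #|A i|) (leqnn (\sum_i #|A i|)) => N.
elim: N A => [|N IH] A size_A hallA.
  by apply: rado_singletons => // i; move: size_A; rewrite (bigD1 i) //=; lia.
have [small|] := boolP [forall i, #|A i| <= 1].
  by apply: rado_singletons => // i; apply: (forallP small).
rewrite negb_forall => /existsP [i0]; rewrite -ltnNge.
case/card_gt1P => x [y [Ax Ay neq_xy]].
have shrink_size z : z \in A i0 -> \sum_i #|shrink A i0 z i| <= N.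
  move=> Az; rewrite -ltnS; apply: leq_trans size_A.
  rewrite (bigD1 i0) // [X in _ < X](bigD1 i0) //= /shrink eqxx.
  rewrite (eq_bigr (fun i => #|A i|)) => [|i /negbTE -> //].
  by rewrite [X in _ < X + _](cardsD1 z) Az.
have lift z : z \in A i0 -> hall (shrink A i0 z) -> indep_transversal A.
  move=> Az /(IH _ (shrink_size z Az)) [f [fA fr]].
  by exists f; split => // i; apply: subsetP (shrink_sub _ _ _ i) _ (fA i).
by case: (rado_shrink i0 hallA neq_xy) => /lift; apply.
Qed.
End Transversal.

(* Apply rado to d k copies of each block. *)
Theorem rado_multi (K : finType) (B : K -> {set E}) (d : K -> nat) :
  (forall J : {set K}, \sum_(k in J) d k <= r (\bigcup_(k in J) B k)) ->
  exists X : K -> {set E},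
    (forall k, X k \subset B k /\ #|X k| = d k) /\
    \sum_k d k <= r (\bigcup_k X k).
Proof.
move=> demand.
pose A (x : {k : K & 'I_(d k)}) := B (tag x).
have hallA : hall A.
  move=> J; have -> : \bigcup_(x in J) A x = \bigcup_(k in tag @: J) B k.
    apply/setP => z; apply/bigcupP/bigcupP => [[x Jx Az]|[k]].
      by exists (tag x); rewrite ?imset_f.
    by case/imsetP => x Jx -> Bz; exists x.
  apply: leq_trans (demand _); rewrite -card_tag_in.
  by apply: subset_leq_card; apply/subsetP => x Jx; rewrite inE imset_f.
have [f [fA fr]] := rado hallA.
have f_inj : injective f.
  suff /imset_injP f_inj : #|f @: [set: _]| == #|[set: {k : K & 'I_(d k)}]|.
    by move=> x y; apply: f_inj; rewrite inE.
  by rewrite eqn_leq leq_imset_card cardsT (leq_trans fr (r_card _)).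
pose X k := f @: [set x | tag x == k].
exists X; split => [k|].
  split; last first.
    rewrite card_imset //; have := card_tag_in d [set k]; rewrite big_set1 => <-.
    by apply: eq_card => x; rewrite !inE.
  by apply/subsetP => z /imsetP [x]; rewrite inE => /eqP tag_x ->; rewrite -tag_x fA.
have -> : \bigcup_k X k = f @: [set: _].
  apply/setP => z; apply/bigcupP/imsetP => [[k _ /imsetP [x _ ->]]|[x _ ->]].
    by exists x.
  by exists (tag x) => //; apply: imset_f; rewrite inE.
apply: leq_trans fr; rewrite -cardsT.
have := card_tag_in d [set: K]; rewrite (eq_bigl xpredT) => [<-|k]; last by rewrite inE.
by apply: subset_leq_card; apply/subsetP => x; rewrite !inE.
Qed.
End SubmodularRank.

Section RowsCols.
Variables (U V : finType).

Definition rows_cols (R : {set U}) (D : {set V}) : {set U + V} :=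
  inl @: R :|: inr @: D.

Lemma mem_rows_cols_l R D (i : U) : (inl i \in rows_cols R D) = (i \in R).
Proof.
rewrite inE (mem_imset _ _ (@inl_inj _ _)).
by case: (i \in R) => //=; apply/imsetP => -[].
Qed.

Lemma mem_rows_cols_r R D (j : V) : (inr j \in rows_cols R D) = (j \in D).
Proof.
rewrite inE (mem_imset _ _ (@inr_inj _ _)) orbC.
by case: (j \in D) => //=; apply/imsetP => -[].
Qed.

Lemma card_rows_cols R D : #|rows_cols R D| = #|R| + #|D|.
Proof.
rewrite cardsU !card_imset; try by [apply: inl_inj|apply: inr_inj].
suff -> : inl @: R :&: inr @: D = set0 by rewrite cards0 subn0.
by apply/setP => z; rewrite !inE; apply/andP => -[/imsetP [i _ ->] /imsetP []].
Qed.

Lemma rows_colsS (R1 R2 : {set U}) (D1 D2 : {set V}) :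
  R1 \subset R2 -> D1 \subset D2 -> rows_cols R1 D1 \subset rows_cols R2 D2.
Proof. by move=> sR sD; apply: setUSS; apply: imsetS. Qed.

Definition blocks (I1 I2 : finType) (R : I1 -> {set U}) (D : I2 -> {set V})
    (k : I1 + I2) : {set U + V} :=
  match k with inl i => inl @: R i | inr j => inr @: D j end.

Lemma bigcup_rows_cols (I1 I2 : finType) (J : {set I1 + I2})
    (R : I1 -> {set U}) (D : I2 -> {set V}) :
  \bigcup_(k in J) blocks R D k
  = rows_cols (\bigcup_(i in [set i | inl i \in J]) R i)
              (\bigcup_(j in [set j | inr j \in J]) D j).
Proof.
apply/setP => z; apply/bigcupP/idP => [[[i|j] Jk zk]|].
- case/imsetP: zk => c Rc ->; rewrite mem_rows_cols_l.
  by apply/bigcupP; exists i; rewrite ?inE.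
- case/imsetP: zk => c Dc ->; rewrite mem_rows_cols_r.
  by apply/bigcupP; exists j; rewrite ?inE.
case: z => [c|c]; rewrite ?mem_rows_cols_l ?mem_rows_cols_r.
  by case/bigcupP => i; rewrite inE => Ji Rc; exists (inl i) => //; apply: imset_f.
by case/bigcupP => j; rewrite inE => Jj Dc; exists (inr j) => //; apply: imset_f.
Qed.

Lemma bigcup_rows_colsT (I1 I2 : finType) (R : I1 -> {set U}) (D : I2 -> {set V}) :
  \bigcup_k blocks R D k = rows_cols (\bigcup_i R i) (\bigcup_j D j).
Proof.
have := bigcup_rows_cols [set: I1 + I2] R D.
rewrite (eq_bigl xpredT) => [->|k]; last by rewrite inE.
by congr rows_cols; apply: eq_bigl => x; rewrite !inE.
Qed.
End RowsCols.

Lemma sum_sumType (I1 I2 : finType) (J : {set I1 + I2}) (f : I1 + I2 -> nat) :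
  \sum_(k in J) f k = \sum_(i in [set i | inl i \in J]) f (inl i)
                    + \sum_(j in [set j | inr j \in J]) f (inr j).
Proof. by rewrite big_sumType; congr (_ + _); apply: eq_bigl => x; rewrite inE. Qed.

Lemma preimset_in_image (aT rT : finType) (f : aT -> rT) (Z : {set rT}) (W : {set aT}) :
  injective f -> Z \subset f @: W ->
  [/\ f @: (f @^-1: Z) = Z, f @^-1: Z \subset W & #|f @^-1: Z| = #|Z|].
Proof.
move=> f_inj sZ.
have preimK : f @: (f @^-1: Z) = Z.
  apply/setP => z; apply/idP/idP => [/imsetP [c]|Zz].
    by rewrite inE => Zc ->.
  by have /imsetP [c _ eq_z] := subsetP sZ z Zz; rewrite eq_z imset_f // inE -eq_z.
split => //; last by rewrite -{2}preimK card_imset.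
apply/subsetP => c; rewrite inE => /(subsetP sZ).
by rewrite (mem_imset _ _ f_inj).
Qed.

(* Selecting a set of columns is right multiplication by a matrix of full
   column rank whose kernel is spanned by the unit vectors of the other
   columns. *)
Section ColumnSelection.
Variables (F : fieldType) (q : nat) (C : {set 'I_q}).
Local Open Scope ring_scope.

Definition colsel : 'M[F]_(q, #|C|) := colsub (fun k => enum_val k) 1%:M.

Lemma mul_colsel m (A : 'M[F]_(m, q)) :
  A *m colsel = colsub (fun k => enum_val k) A.
Proof. by rewrite mulmx_colsub mulmx1. Qed.

Lemma rank_colsel : \rank colsel = #|C|.
Proof.
have colsel_orth : colsel^T *m colsel = 1%:M.
  rewrite /colsel trmx_mxsub trmx1 -mxsub_mul mulmx1.
  by apply/matrixP => a b; rewrite !mxE (inj_eq enum_val_inj).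
apply/eqP; rewrite eqn_leq rank_leq_col /=.
by rewrite -{1}(mxrank1 F #|C|) -colsel_orth mxrankM_maxr.
Qed.

Lemma delta_colsel (j : 'I_q) : j \notin C -> (delta_mx 0 j : 'rV[F]_q) *m colsel = 0.
Proof.
move=> notCj; rewrite mul_colsel; apply/matrixP => a b; rewrite !mxE.
have neq_j : enum_val b != j by apply: contraNneq notCj => <-; apply: enum_valP.
by rewrite (negbTE neq_j) andbF.
Qed.

(* Every vector killed by colsel vanishes on C, so it is a combination of
   the unit vectors outside C. *)
Lemma kermx_colsel :
  (kermx colsel <= \sum_(j in ~: C) <<delta_mx 0 j : 'rV[F]_q>>)%MS.
Proof.
apply/row_subP => a; set u := row a _.
have u_ker : u *m colsel = 0 by rewrite /u -row_mul mulmx_ker row0.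
rewrite (row_sum_delta u); apply: summx_sub => c _.
have [Cc|notCc] := boolP (c \in C).
  have : (u *m colsel) 0 (enum_rank_in Cc c) = 0 by rewrite u_ker mxE.
  by rewrite mul_colsel mxE enum_rankK_in // => ->; rewrite scale0r sub0mx.
by apply/scalemx_sub/(sumsmx_sup c); rewrite ?inE ?genmxE.
Qed.
End ColumnSelection.

Section LinearMatroid.
Variables (F : fieldType) (p q : nat) (G : 'M[F]_(p, q)).
Local Open Scope ring_scope.

Definition vec (x : 'I_p + 'I_q) : 'rV[F]_q :=
  match x with inl i => row i G | inr j => delta_mx 0 j end.

Definition span_of (X : {set 'I_p + 'I_q}) : 'M[F]_q :=
  (\sum_(x in X) <<vec x>>)%MS.

Definition rk (X : {set 'I_p + 'I_q}) : nat := \rank (span_of X).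

Lemma vec_span (X : {set 'I_p + 'I_q}) x : x \in X -> (vec x <= span_of X)%MS.
Proof. by move=> Xx; apply: (sumsmx_sup x) => //; rewrite genmxE. Qed.

Lemma span_ofS (X Y : {set 'I_p + 'I_q}) : X \subset Y -> (span_of X <= span_of Y)%MS.
Proof.
move=> sXY; apply/sumsmx_subP => x Xx; rewrite genmxE.
exact/vec_span/(subsetP sXY).
Qed.

Lemma rk_mono (X Y : {set 'I_p + 'I_q}) : X \subset Y -> (rk X <= rk Y)%N.
Proof. by move=> sXY; apply/mxrankS/span_ofS. Qed.

(* Submodularity, from the dimension formula for a sum of subspaces. *)
Lemma rk_submod (X Y : {set 'I_p + 'I_q}) : (rk (X :|: Y) + rk (X :&: Y) <= rk X + rk Y)%N.
Proof.
rewrite -[(rk X + rk Y)%N]mxrank_sum_cap leq_add //; apply: mxrankS.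
  rewrite [span_of (X :|: Y)]/span_of.
  apply/sumsmx_subP => x; rewrite inE genmxE => /orP [] XYx.
    by apply: submx_trans (addsmxSl _ _); apply: vec_span.
  by apply: submx_trans (addsmxSr _ _); apply: vec_span.
by rewrite sub_capmx !span_ofS ?subsetIl ?subsetIr.
Qed.

Lemma rk_card (X : {set 'I_p + 'I_q}) : (rk X <= #|X|)%N.
Proof.
rewrite /rk /span_of -sum1_card.
elim/big_rec2: _ => [|x a A _ IH]; first by rewrite mxrank0.
apply: leq_trans (mxrank_adds_leqif _ _) _.
by rewrite leq_add // genmxE rank_leq_row.
Qed.

(* The rank of the rows R together with the columns D: the unit vectors of
   D contribute #|D|, and modulo their span the rows of R reduce to the
   submatrix G(R, ~: D). *)
Lemma rk_rows_cols (R : {set 'I_p}) (D : {set 'I_q}) :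
  rk (rows_cols R D) = (#|D| + \rank (submatrix G R (~: D)))%N.
Proof.
rewrite /rk; set W := span_of _; set P := colsel F (~: D).
set V := rowsub (fun k : 'I_#|R| => enum_val k) G.
have subV : submatrix G R (~: D) = V *m P by rewrite mul_colsel /submatrix mxsubcr.
have V_W : (V <= W)%MS.
  apply/row_subP => k; rewrite row_rowsub.
  by apply: (vec_span (x := inl _)); rewrite mem_rows_cols_l enum_valP.
have ker_W : (kermx P <= W)%MS.
  apply: submx_trans (kermx_colsel _ _) _; apply/sumsmx_subP => j.
  rewrite setCK genmxE => Dj.
  by apply: (vec_span (x := inr _)); rewrite mem_rows_cols_r.
have W_V : (W <= V + kermx P)%MS.
  apply/sumsmx_subP => -[i|j]; rewrite genmxE.
    rewrite mem_rows_cols_l => Ri; apply: submx_trans (addsmxSl _ _).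
    by rewrite /= -(enum_rankK_in Ri Ri) -(row_rowsub _ G) row_sub.
  rewrite mem_rows_cols_r => Dj; apply: submx_trans (addsmxSr _ _).
  by rewrite sub_kermx delta_colsel // inE Dj.
have rank_WP : \rank (W *m P) = \rank (V *m P).
  apply/eqP; rewrite eqn_leq (mxrankS (submxMr P V_W)) andbT mxrankS //.
  apply: submx_trans (submxMr P W_V) _.
  by rewrite addsmxMr addsmx_sub submx_refl mulmx_ker sub0mx.
rewrite -(mxrank_mul_ker W P) (capmx_idPr ker_W) mxrank_ker.
rewrite rank_colsel rank_WP -subV; have := cardsC D; rewrite card_ord; lia.
Qed.
End LinearMatroid.

Section Partition.
Variables (K U : finType) (T : K -> {set U}).
Hypothesis T_disj : forall j k : K, j != k -> [disjoint T j & T k].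
Hypothesis T_cover : \bigcup_k T k = [set: U].

Lemma block_uniq c j k : c \in T j -> c \in T k -> j = k.
Proof.
move=> Tjc Tkc; apply/eqP/negPn/negP => /T_disj/disjointFr/(_ Tjc).
by rewrite Tkc.
Qed.

Lemma block_ex c : exists k, c \in T k.
Proof.
have : c \in \bigcup_k T k by rewrite T_cover inE.
by case/bigcupP => k _ Tkc; exists k.
Qed.

Lemma setC_bigcup_blocks (L : {set K}) :
  ~: (\bigcup_(k in L) T k) = \bigcup_(k in ~: L) T k.
Proof.
apply/setP => c; rewrite inE; have [k0 Tk0c] := block_ex c.
apply/idP/bigcupP => [notLc|[k]].
  by exists k0 => //; rewrite inE; apply: contra notLc => Lk0; apply/bigcupP; exists k0.
rewrite inE => notLk Tkc; apply/bigcupP => -[j Lj Tjc].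
by move: notLk; rewrite (block_uniq Tkc Tjc) Lj.
Qed.

Lemma setC_bigcup_sub (V : K -> {set U}) : (forall k, V k \subset T k) ->
  ~: (\bigcup_k V k) = \bigcup_k (T k :\: V k).
Proof.
move=> VT; apply/setP => c; rewrite inE; have [k0 Tk0c] := block_ex c.
apply/idP/bigcupP => [notVc|[k _]].
  exists k0 => //; rewrite !inE Tk0c andbT.
  by apply: contra notVc => Vk0c; apply/bigcupP; exists k0.
rewrite inE => /andP [notVkc Tkc]; apply/bigcupP => -[j _ Vjc].
by move: notVkc; rewrite (block_uniq Tkc (subsetP (VT j) _ Vjc)) Vjc.
Qed.
End Partition.

Section RankSelection.
Variables (F : fieldType) (p q m n : nat) (G : 'M[F]_(p, q)).
Variables (S : 'I_m -> {set 'I_p}) (T : 'I_n -> {set 'I_q}).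
Hypothesis S_disj : forall i j : 'I_m, i != j -> [disjoint S i & S j].
Hypothesis T_disj : forall j k : 'I_n, j != k -> [disjoint T j & T k].
Hypothesis T_cover : \bigcup_(j < n) T j = [set: 'I_q].
Variables (s : 'I_m -> nat) (t : 'I_n -> nat).
Hypothesis t_le : forall j : 'I_n, t j <= #|T j|.

Definition block_rank (I : {set 'I_m}) (K : {set 'I_n}) : nat :=
  \rank (submatrix G (\bigcup_(i in I) S i) (\bigcup_(k in K) T k)).

(* The rank condition of the theorem, with the subtraction moved across. *)
Definition rank_condition : Prop :=
  forall (I : {set 'I_m}) (K : {set 'I_n}),
    \sum_(i in I) s i + \sum_(k in K) t k <= block_rank I K + \sum_j t j.

(* Choosing t j columns in T j is choosing the #|T j| - t j others. *)
Lemma sum_cosize (L : {set 'I_n}) :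
  \sum_(j in L) (#|T j| - t j) + \sum_(j in L) t j = \sum_(j in L) #|T j|.
Proof. by rewrite -big_split /=; apply: eq_bigr => j _; rewrite subnK. Qed.

Lemma rk_blocks (I : {set 'I_m}) (L : {set 'I_n}) :
  rk G (rows_cols (\bigcup_(i in I) S i) (\bigcup_(j in L) T j))
  = \sum_(j in L) #|T j| + block_rank I (~: L).
Proof.
by rewrite rk_rows_cols (card_bigcup_disjoint _ T_disj) (setC_bigcup_blocks T_disj).
Qed.

(* Necessity: the chosen rows of the I-blocks, together with the unchosen
   columns of the blocks outside K, form an independent set (a subset of
   the independent set of all chosen rows and unchosen columns), whose
   rank is bounded by that of the I-blocks and the blocks outside K. *)
Lemma rank_condition_necessary (ss : 'I_m -> {set 'I_p}) (tt : 'I_n -> {set 'I_q}) :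
  (forall i, ss i \subset S i /\ #|ss i| = s i) ->
  (forall j, tt j \subset T j /\ #|tt j| = t j) ->
  \rank (submatrix G (\bigcup_(i < m) ss i) (\bigcup_(j < n) tt j)) = \sum_(i < m) s i ->
  rank_condition.
Proof.
move=> ss_spec tt_spec rank_sel I K.
have ttT j : tt j \subset T j by case: (tt_spec j).
set R := \bigcup_i ss i; set C := \bigcup_j tt j.
set X := rows_cols R (~: C).
have indepX : #|X| <= rk G X.
  rewrite rk_rows_cols setCK rank_sel card_rows_cols addnC leq_add2l.
  apply: leq_trans (card_bigcup_le _ _) _.
  by rewrite (eq_bigr s) // => i _; case: (ss_spec i).
set Y := rows_cols (\bigcup_(i in I) ss i) (\bigcup_(j in ~: K) (T j :\: tt j)).
have indepY : #|Y| <= rk G Y.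
  apply: (@indep_subset _ (rk G) (rk_submod G) (rk_card G) X) indepX.
  rewrite /X (setC_bigcup_sub T_disj T_cover ttT) rows_colsS //.
    by apply/bigcupsP => i _; rewrite /R (bigcup_sup i).
  by apply/bigcupsP => j _; rewrite (bigcup_sup j).
have card_Y : #|Y| = \sum_(i in I) s i + \sum_(j in ~: K) (#|T j| - t j).
  rewrite card_rows_cols !card_bigcup_disjoint.
  - congr (_ + _); apply: eq_bigr => j _; first by case: (ss_spec j).
    by case: (tt_spec j) => sub <-; rewrite cardsDS.
  - move=> j k /T_disj; apply: disjointW; exact: subsetDl.
  move=> i j /S_disj; apply: disjointW; [exact: (ss_spec i).1|exact: (ss_spec j).1].
have sub_Y : Y \subset rows_cols (\bigcup_(i in I) S i) (\bigcup_(j in ~: K) T j).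
  rewrite rows_colsS //; apply/bigcupsP => i Ii.
    by apply: subset_trans (ss_spec i).1 (bigcup_sup _ Ii).
  by apply: subset_trans (subsetDl _ _) (bigcup_sup _ Ii).
have := leq_trans indepY (rk_mono G sub_Y); rewrite rk_blocks setCK card_Y.
have split_t : \sum_j t j = \sum_(k in K) t k + \sum_(j in ~: K) t j.
  exact: sum_setC.
have := sum_cosize (~: K); lia.
Qed.

(* The demands of the transversal problem on the blocks S i and T j: s i
   rows in S i and #|T j| - t j columns in T j (the columns left out of
   the selection). *)
Definition demand (k : 'I_m + 'I_n) : nat :=
  match k with inl i => s i | inr j => #|T j| - t j end.

Lemma rado_condition_blocks : rank_condition ->
  forall J : {set 'I_m + 'I_n}, \sum_(k in J) demand k <= rk G (\bigcup_(k in J) blocks S T k).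
Proof.
move=> cond J.
pose I : {set 'I_m} := [set i | inl i \in J].
pose L : {set 'I_n} := [set j | inr j \in J].
have sum_J : \sum_(k in J) demand k = \sum_(i in I) s i + \sum_(j in L) (#|T j| - t j).
  exact: sum_sumType.
have cup_J : \bigcup_(k in J) blocks S T k
    = rows_cols (\bigcup_(i in I) S i) (\bigcup_(j in L) T j).
  exact: bigcup_rows_cols.
have split_t : \sum_j t j = \sum_(k in ~: L) t k + \sum_(j in L) t j.
  by rewrite (sum_setC t (~: L)) setCK.
rewrite sum_J cup_J rk_blocks; have := cond I (~: L); have := sum_cosize L; lia.
Qed.

(* Sufficiency: Rado's theorem yields, in each row block S i, s i rows and,
   in each column block T j, #|T j| - t j columns, together independent; the
   remaining t j columns of each T j give the required selection. *)
Lemma rank_condition_sufficient : rank_condition ->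
  exists (ss : 'I_m -> {set 'I_p}) (tt : 'I_n -> {set 'I_q}),
    (forall i, ss i \subset S i /\ #|ss i| = s i) /\
    (forall j, tt j \subset T j /\ #|tt j| = t j) /\
    \rank (submatrix G (\bigcup_(i < m) ss i) (\bigcup_(j < n) tt j))
      = \sum_(i < m) s i.
Proof.
move=> cond.
have [X [X_spec X_indep]] :=
  rado_multi (rk_mono G) (rk_submod G) (rk_card G) (rado_condition_blocks cond).
pose ss i := inl @^-1: X (inl i).
pose co j := inr @^-1: X (inr j).
have ss_spec i : [/\ inl @: ss i = X (inl i), ss i \subset S i & #|ss i| = s i].
  case: (X_spec (inl i)) => sub card_X; case: (preimset_in_image inl_inj sub).
  by move=> preimK ss_S ->; split.
have co_spec j :
    [/\ inr @: co j = X (inr j), co j \subset T j & #|co j| = #|T j| - t j].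
  case: (X_spec (inr j)) => sub card_X; case: (preimset_in_image inr_inj sub).
  by move=> preimK co_T ->; split.
have co_T j : co j \subset T j by case: (co_spec j).
exists ss, (fun j => T j :\: co j); split; first by move=> i; case: (ss_spec i).
split=> [j|]; first by case: (co_spec j) => _ sub card_co; rewrite subsetDl cardsDS // card_co subKn.
rewrite -(setC_bigcup_sub T_disj T_cover co_T).
have cup_X : \bigcup_k X k = rows_cols (\bigcup_i ss i) (\bigcup_j co j).
  rewrite -bigcup_rows_colsT; apply: eq_bigr => -[i|j] _.
    by case: (ss_spec i).
  by case: (co_spec j).
have sum_demand : \sum_k demand k = \sum_i s i + \sum_j (#|T j| - t j).
  exact: big_sumType.
have card_co : #|\bigcup_j co j| <= \sum_j (#|T j| - t j).
  apply: leq_trans (card_bigcup_le _ _) _.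
  by rewrite (eq_bigr (fun j => #|T j| - t j)) // => j _; case: (co_spec j).
have card_ss : #|\bigcup_i ss i| <= \sum_i s i.
  apply: leq_trans (card_bigcup_le _ _) _.
  by rewrite (eq_bigr s) // => i _; case: (ss_spec i).
move: X_indep; rewrite cup_X rk_rows_cols sum_demand => indep.
apply/eqP; rewrite eqn_leq (leq_trans (rank_leq_row _) card_ss) /=.
rewrite -(leq_add2l (\sum_j (#|T j| - t j))) addnC.
by apply: leq_trans indep _; rewrite leq_add2r.
Qed.
End RankSelection.

Unset Implicit Arguments.
Theorem mainTheorem2 (F : fieldType) (p q m n : nat) (G : 'M[F]_(p, q))
  (S : 'I_m -> {set 'I_p}) (T : 'I_n -> {set 'I_q})
  (hSdisj : forall i j : 'I_m, i != j -> [disjoint S i & S j])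
  (hScov : \bigcup_(i < m) S i = [set: 'I_p])
  (hTdisj : forall j k : 'I_n, j != k -> [disjoint T j & T k])
  (hTcov : \bigcup_(j < n) T j = [set: 'I_q])
  (s : 'I_m -> nat) (t : 'I_n -> nat)
  (ht : forall j : 'I_n, t j <= #|T j|) :
  (exists (ss : 'I_m -> {set 'I_p}) (tt : 'I_n -> {set 'I_q}),
      (forall i, ss i \subset S i /\ #|ss i| = s i) /\
      (forall j, tt j \subset T j /\ #|tt j| = t j) /\
      \rank (submatrix G (\bigcup_(i < m) ss i) (\bigcup_(j < n) tt j))
        = \sum_(i < m) s i)
  <->
  (forall (I : {set 'I_m}) (K : {set 'I_n}),
      ((\sum_(i in I) s i + \sum_(k in K) t k)%:Z - (\sum_(j < n) t j)%:Z
        <= (\rank (submatrix G (\bigcup_(i in I) S i) (\bigcup_(k in K) T k)))%:Z)%R).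
Proof.
(* The integer form of
   the rank condition is rank_condition. *)
have int_condition (I : {set 'I_m}) (K : {set 'I_n}) :
    ((\sum_(i in I) s i + \sum_(k in K) t k)%:Z - (\sum_(j < n) t j)%:Z
       <= (block_rank G S T I K)%:Z)%R
    <-> \sum_(i in I) s i + \sum_(k in K) t k <= block_rank G S T I K + \sum_(j < n) t j.
  by split; lia.
split=> [[ss [tt [ss_spec [tt_spec rank_sel]]]] I K|cond].
  have cond := rank_condition_necessary hSdisj hTdisj hTcov ht ss_spec tt_spec rank_sel.
  exact/int_condition/cond.
apply: (rank_condition_sufficient hTdisj hTcov ht) => I K.
exact/int_condition/cond.
Qed.
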